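(* Let $H$ be a finite subgroup of a group $G$ and let $a,b\in G$. Then either $aH=Hb$, or $|aH\cap Hb|\le\frac12\,|H|$. *)

From Stdlib Require Import List Arith.
Import ListNotations.

Section GroupDefs.
Context {G : Type} (mul : G -> G -> G) (e : G) (inv : G -> G).

Definition group_axioms : Prop :=
  (forall x y z, mul x (mul y z) = mul (mul x y) z) /\
  (forall x, mul e x = x) /\ (forall x, mul x e = x) /\
  (forall x, mul (inv x) x = e) /\ (forall x, mul x (inv x) = e).

Definition is_subgroup (H : G -> Prop) : Prop :=
  H e /\ (forall x y, H x -> H y -> H (mul x y)) /\ (forall x, H x -> H (inv x)).

Definition lcoset (a : G) (H : G -> Prop) : G -> Prop :=
  fun x => exists h, H h /\ x = mul a h.
Definition rcoset (H : G -> Prop) (b : G) : G -> Prop :=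
  fun x => exists h, H h /\ x = mul h b.
End GroupDefs.

Definition has_card {G : Type} (S : G -> Prop) (n : nat) : Prop :=
  exists l : list G, NoDup l /\ (forall x, In x l <-> S x) /\ length l = n.

From Stdlib Require Import List Arith Lia Classical.

(* Pick x in aH ∩ Hb, so that aH = xH and Hb = Hx.  Left multiplication by x⁻¹
   maps xH ∩ Hx injectively into the subgroup K = H ∩ x⁻¹Hx of H.  A subgroup
   K of H with more than |H|/2 elements is H itself: for h in H, the sets K and
   hK both lie in H, so they meet, and h ∈ K K⁻¹ = K.  Hence xH ⊆ Hx when the
   intersection is large, and the same argument in the opposite group gives
   Hx ⊆ xH. *)

Lemma NoDup_incl_common {A : Type} (L l1 l2 : list A) :
  NoDup l1 -> NoDup l2 -> incl l1 L -> incl l2 L ->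
  length L < length l1 + length l2 -> exists y, In y l1 /\ In y l2.
Proof.
  intros N1 N2 I1 I2 Hlen. apply NNPP; intro Hdisj.
  assert (N12 : NoDup (l1 ++ l2)).
  { apply NoDup_app; auto. intros y Y1 Y2; apply Hdisj; eauto. }
  pose proof (NoDup_incl_length N12 (incl_app I1 I2)) as Hle.
  rewrite length_app in Hle. lia.
Qed.

Definition mulop {G : Type} (mul : G -> G -> G) : G -> G -> G :=
  fun x y => mul y x.

Section Group.
Context {G : Type} (mul : G -> G -> G) (e : G) (inv : G -> G).
Hypothesis hG : group_axioms mul e inv.

Local Infix "·" := mul (at level 40, left associativity).
Local Notation "x ⁻¹" := (inv x) (at level 2, left associativity, format "x ⁻¹").

Lemma mulgA x y z : x · (y · z) = x · y · z. Proof. apply hG. Qed.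
Lemma mul1g x : e · x = x. Proof. apply hG. Qed.
Lemma mulg1 x : x · e = x. Proof. apply hG. Qed.
Lemma mulVg x : x⁻¹ · x = e. Proof. apply hG. Qed.
Lemma mulgV x : x · x⁻¹ = e. Proof. apply hG. Qed.

Lemma mulKg x y : x⁻¹ · (x · y) = y.
Proof. now rewrite mulgA, mulVg, mul1g. Qed.

Lemma mulKVg x y : x · (x⁻¹ · y) = y.
Proof. now rewrite mulgA, mulgV, mul1g. Qed.

Lemma mulgK x y : y · x · x⁻¹ = y.
Proof. now rewrite <- mulgA, mulgV, mulg1. Qed.

Lemma mulgKV x y : y · x⁻¹ · x = y.
Proof. now rewrite <- mulgA, mulVg, mulg1. Qed.

Lemma mulgI x y z : x · y = x · z -> y = z.
Proof. intro E. now rewrite <- (mulKg x y), E, mulKg. Qed.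

Lemma invgK x : x⁻¹⁻¹ = x.
Proof. apply (mulgI x⁻¹). now rewrite mulVg, mulgV. Qed.

Lemma invMg x y : (x · y)⁻¹ = y⁻¹ · x⁻¹.
Proof.
  apply (mulgI (x · y)).
  now rewrite mulgV, mulgA, mulgK, mulgV.
Qed.

Lemma group_axioms_mulop : group_axioms (mulop mul) e inv.
Proof.
  unfold mulop; repeat split; intros.
  - symmetry; apply mulgA.
  - apply mulg1.
  - apply mul1g.
  - apply mulgV.
  - apply mulVg.
Qed.

Section Subgroup.
Variable H : G -> Prop.
Hypothesis hH : is_subgroup mul e inv H.

Lemma group1 : H e. Proof. apply hH. Qed.
Lemma groupM x y : H x -> H y -> H (x · y). Proof. apply hH. Qed.
Lemma groupV x : H x -> H x⁻¹. Proof. apply hH. Qed.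

Lemma is_subgroup_mulop : is_subgroup (mulop mul) e inv H.
Proof.
  split; [apply group1 | split; [intros x y Hx Hy; now apply groupM | apply groupV]].
Qed.

Lemma is_subgroup_inter (K : G -> Prop) :
  is_subgroup mul e inv K -> is_subgroup mul e inv (fun k => H k /\ K k).
Proof.
  intros [K1 [KM KV]]. split; [|split].
  - split; [apply group1 | exact K1].
  - intros x y [Hx Kx] [Hy Ky]. split; [now apply groupM | auto].
  - intros x [Hx Kx]. split; [now apply groupV | auto].
Qed.

Lemma is_subgroup_conj x : is_subgroup mul e inv (fun k => H (x · k · x⁻¹)).
Proof.
  split; [|split].
  - rewrite mulg1, mulgV. apply group1.
  - intros k1 k2 Hk1 Hk2.
    replace (x · (k1 · k2) · x⁻¹) with (x · k1 · x⁻¹ · (x · k2 · x⁻¹))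
      by now rewrite !mulgA, mulgKV.
    now apply groupM.
  - intros k Hk.
    replace (x · k⁻¹ · x⁻¹) with ((x · k · x⁻¹)⁻¹)
      by now rewrite !invMg, invgK, mulgA.
    now apply groupV.
Qed.

Lemma lcoset_eq a x :
  lcoset mul a H x -> forall y, lcoset mul a H y <-> lcoset mul x H y.
Proof.
  intros [h0 [Hh0 ->]] y. split.
  - intros [h [Hh ->]]. exists (h0⁻¹ · h). split.
    + apply groupM; [now apply groupV | exact Hh].
    + now rewrite <- mulgA, mulKVg.
  - intros [h [Hh ->]]. exists (h0 · h). split.
    + now apply groupM.
    + symmetry; apply mulgA.
Qed.

Lemma large_subgroup_full (K : G -> Prop) (n : nat) (ks : list G) :
  has_card H n -> is_subgroup mul e inv K -> (forall k, K k -> H k) ->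
  NoDup ks -> (forall k, In k ks -> K k) -> n < 2 * length ks ->
  forall h, H h -> K h.
Proof.
  intros [L [_ [HL <-]]] [_ [KM KV]] KH Nks Kks Hlen h Hh.
  destruct (NoDup_incl_common L ks (map (mul h) ks)) as [y [Y1 Y2]].
  - exact Nks.
  - apply NoDup_map_NoDup_ForallPairs; [intros u v _ _; apply mulgI | exact Nks].
  - intros k Hk. now apply HL, KH, Kks.
  - intros y Hy. apply in_map_iff in Hy as [k [<- Hk]].
    now apply HL, groupM, KH, Kks.
  - rewrite length_map. lia.
  - apply in_map_iff in Y2 as [k [Ey Hk]].
    rewrite <- (mulgK k h), Ey.
    apply KM; [now apply Kks | now apply KV, Kks].
Qed.

Lemma lcoset_sub_rcoset (n : nat) (x : G) (s : list G) :
  has_card H n -> NoDup s ->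
  (forall z, In z s -> lcoset mul x H z /\ rcoset mul H x z) ->
  n < 2 * length s ->
  forall y, lcoset mul x H y -> rcoset mul H x y.
Proof.
  intros hn Ns Hs Hlen y [h [Hh ->]].
  assert (Hconj : H (x · h · x⁻¹)).
  { apply (large_subgroup_full (fun k => H k /\ H (x · k · x⁻¹)) n (map (mul x⁻¹) s));
      auto.
    - apply is_subgroup_inter, is_subgroup_conj.
    - intros k [Hk _]; exact Hk.
    - apply NoDup_map_NoDup_ForallPairs; [intros u v _ _; apply mulgI | exact Ns].
    - intros k Hk. apply in_map_iff in Hk as [z [<- Hz]].
      destruct (Hs z Hz) as [[h1 [Hh1 ->]] [h2 [Hh2 Ez]]]. split.
      + now rewrite mulKg.
      + now rewrite mulKg, Ez, mulgK.
    - now rewrite length_map. }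
  exists (x · h · x⁻¹). split; [exact Hconj | now rewrite mulgKV].
Qed.

End Subgroup.
End Group.

Lemma cosets_eq_of_large_inter {G : Type} (mul : G -> G -> G) (e : G) (inv : G -> G)
  (hG : group_axioms mul e inv) (H : G -> Prop) (hH : is_subgroup mul e inv H)
  (n : nat) (hn : has_card H n) (a b : G) (m : nat) :
  has_card (fun x => lcoset mul a H x /\ rcoset mul H b x) m -> n < 2 * m ->
  forall y, lcoset mul a H y <-> rcoset mul H b y.
Proof.
  intros [s [Ns [Hs <-]]] Hlen.
  destruct s as [|x t] eqn:Es; [simpl in Hlen; lia|]. rewrite <- Es in *.
  assert (Hx : In x s) by (rewrite Es; now left).
  destruct (proj1 (Hs x) Hx) as [Hxa Hxb].
  pose proof (group_axioms_mulop mul e inv hG) as hGop.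
  pose proof (is_subgroup_mulop mul e inv H hH) as hHop.
  pose proof (lcoset_eq mul e inv hG H hH a x Hxa) as Ea.
  assert (Eb : forall y, rcoset mul H b y <-> rcoset mul H x y)
    by exact (lcoset_eq (mulop mul) e inv hGop H hHop b x Hxb).
  assert (Hsx : forall z, In z s -> lcoset mul x H z /\ rcoset mul H x z).
  { intros z Hz. destruct (proj1 (Hs z) Hz). split; [now apply Ea | now apply Eb]. }
  intro y. rewrite Ea, Eb. split.
  - now apply (lcoset_sub_rcoset mul e inv hG H hH n x s).
  - apply (lcoset_sub_rcoset (mulop mul) e inv hGop H hHop n x s); auto.
    intros z Hz. now apply and_comm, Hsx.
Qed.

Theorem lemma2p2 (G : Type) (mul : G -> G -> G) (e : G) (inv : G -> G)
  (hG : group_axioms mul e inv) (H : G -> Prop) (hH : is_subgroup mul e inv H)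
  (n : nat) (hn : has_card H n) (a b : G) :
  (forall x, lcoset mul a H x <-> rcoset mul H b x) \/
  (forall m, has_card (fun x => lcoset mul a H x /\ rcoset mul H b x) m -> 2 * m <= n).
Proof.
  destruct (classic (forall x, lcoset mul a H x <-> rcoset mul H b x)) as [Heq | Hneq].
  - now left.
  - right. intros m hm. apply Nat.nlt_ge. intro Hlt.
    exact (Hneq (cosets_eq_of_large_inter mul e inv hG H hH n hn a b m hm Hlt)).
Qed.
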